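(* Let $(p,f)$ be an SCF-RT rationalizable within the class of symmetric RUM-CFs, and let $x,y\in X$. If $(x,y)\in T(R^s\cup R^{srt})$, then every symmetric RUM-CF $(u,g,r)$ rationalizing $(p,f)$ satisfies $u(x)\geq u(y)$. If $(x,y)\in T_P(R^s\cup R^{srt})$, then every such model satisfies $u(x)>u(y)$.
   Context: $X$ is a finite set of options; $C=\{(x,y): x,y\in X,\ x\neq y\}$; $D\subseteq C$ is a fixed non-empty set with $(x,y)\in D\Rightarrow (y,x)\in D$. An SCF $p$ assigns to each $(x,y)\in D$ a number $p(x,y)>0$ with $p(x,y)+p(y,x)=1$. An SCF-RT is a pair $(p,f)$ where $p$ is an SCF and $f$ assigns to each $(x,y)\in D$ a strictly positive density $f(x,y)$ on $\mathbb{R}^+$ with cdf $F(x,y)$. A RUM is a pair $(u,g)$ with $u:X\to\mathbb{R}$ and $g$ assigning to each $(x,y)\in C$ a density $g(x,y)$ on $\mathbb{R}$ (cdf $G(x,y)$) with $\int v\,g(x,y)(v)\,dv=u(x)-u(y)=:v(x,y)$, $g(x,y)(v)=g(y,x)(-v)$ for all $v$, and connected support. A RUM-CF is $(u,g,r)$ with $(u,g)$ a RUM and $r:\mathbb{R}^{++}\to\mathbb{R}^+$ continuous, strictly decreasing where $r(v)>0$, $\lim_{v\to0}r(v)=\infty$, $\lim_{v\to\infty}r(v)=0$; $r^{-1}(t)$ ($t>0$) is the inverse of $r$ restricted to $\{r>0\}$. It rationalizes $(p,f)$ if for all $(x,y)\in D$: $G(x,y)(0)=p(y,x)$ and $\frac{1-G(x,y)(r^{-1}(t))}{1-G(x,y)(0)}=F(x,y)(t)$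 for all $t>0$. It is symmetric if $g(x,y)(v(x,y)+\delta)=g(x,y)(v(x,y)-\delta)$ for all $(x,y)\in C$, $\delta\geq0$. For $(a,b)\in D$ with $p(a,b)>p(b,a)$, $t(a,b)>0$ is defined by $F(a,b)(t(a,b))=p(b,a)/p(a,b)$ (undefined otherwise). Relations on $X$: $(x,y)\in R^s$ iff $x=y$, or $(x,y)\in D$ and $p(x,y)\geq p(y,x)$; $(x,y)\in R^{srt}$ iff $(x,y)\in C\setminus D$ and there is $z\in X$ with $t(x,z)\leq t(y,z)$ or $t(z,x)\geq t(z,y)$ (the compared quantities being defined). For a binary relation $R$, $T(R)$ is its transitive closure and $T_P(R)$ the asymmetric part of $T(R)$ ($(x,y)\in T(R)$, $(y,x)\notin T(R)$). *)

From HB Require Import structures.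
From mathcomp Require Import all_boot all_order all_algebra.
From mathcomp Require Import all_classical all_reals all_analysis.
From Stdlib Require Import Relations.Relation_Operators.
Set Implicit Arguments. Unset Strict Implicit. Unset Printing Implicit Defensive.
Import Order.TTheory GRing.Theory Num.Theory.
Import numFieldNormedType.Exports.
Local Open Scope classical_set_scope.
Local Open Scope ring_scope.

Section Defs.
Context {R : realType} {X : finType}.
Local Notation mu := (@lebesgue_measure R).

Definition nonnegR : set R := `[0, +oo[.
Definition posR : set R := `]0, +oo[.

Definition is_domain (D : X -> X -> Prop) : Prop :=
  (exists x y, D x y) /\ (forall x y, D x y -> x <> y) /\ (forall x y, D x y -> D y x).

(* SCF: defined on D (values outside D are irrelevant) *)
Definition is_SCF (D : X -> X -> Prop) (p : X -> X -> R) : Prop :=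
  forall x y, D x y -> 0 < p x y /\ p x y + p y x = 1.

Definition is_pos_density (h : R -> R) : Prop :=
  measurable_fun nonnegR h /\ (forall t, 0 <= t -> 0 < h t) /\
  (\int[mu]_(t in nonnegR) (h t)%:E = 1)%E.

Definition cdf_pos (h : R -> R) (t : R) : R :=
  fine (\int[mu]_(s in (`[0%R, t]%classic : set R)) (h s)%:E)%E.

Definition is_SCF_RT (D : X -> X -> Prop) (p : X -> X -> R) (f : X -> X -> R -> R) : Prop :=
  is_SCF D p /\ forall x y, D x y -> is_pos_density (f x y).

Definition is_density (h : R -> R) : Prop :=
  measurable_fun setT h /\ (forall v, 0 <= h v) /\ (\int[mu]_v (h v)%:E = 1)%E.

Definition cdf (h : R -> R) (v : R) : R :=
  fine (\int[mu]_(w in (`]-oo, v]%classic : set R)) (h w)%:E)%E.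

Definition support (h : R -> R) : set R := closure [set v | h v != 0].

Definition is_RUM (u : X -> R) (g : X -> X -> R -> R) : Prop :=
  forall x y, x <> y ->
    [/\ is_density (g x y),
        mu.-integrable setT (fun v => (v * g x y v)%:E),
        (\int[mu]_v (v * g x y v)%:E = (u x - u y)%:E)%E,
        (forall v, g x y v = g y x (- v)) &
        connected (support (g x y))].

(* the function r of a RUM-CF; only its values on R^{++} matter *)
Definition is_CF (r : R -> R) : Prop :=
  [/\ (forall v, 0 < v -> 0 <= r v),
      {in posR, continuous r},
      (forall a b, 0 < a -> a < b -> 0 < r a -> 0 < r b -> r b < r a),
      r x @[x --> 0^'+] --> +oo &
      r x @[x --> +oo] --> 0].

Definition r_inv (r : R -> R) (t : R) : R :=
  xget 0 [set v | 0 < v /\ 0 < r v /\ r v = t].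

Definition is_RUM_CF (u : X -> R) (g : X -> X -> R -> R) (r : R -> R) : Prop :=
  is_RUM u g /\ is_CF r.

Definition rationalizes (u : X -> R) (g : X -> X -> R -> R) (r : R -> R)
    (D : X -> X -> Prop) (p : X -> X -> R) (f : X -> X -> R -> R) : Prop :=
  forall x y, D x y ->
    cdf (g x y) 0 = p y x /\
    forall t, 0 < t ->
      (1 - cdf (g x y) (r_inv r t)) / (1 - cdf (g x y) 0) = cdf_pos (f x y) t.

Definition is_symmetric (u : X -> R) (g : X -> X -> R -> R) : Prop :=
  forall x y, x <> y -> forall d, 0 <= d ->
    g x y (u x - u y + d) = g x y (u x - u y - d).

Definition sym_rationalizable (D : X -> X -> Prop) (p : X -> X -> R)
    (f : X -> X -> R -> R) : Prop :=
  exists u g r, is_RUM_CF u g r /\ is_symmetric u g /\ rationalizes u g r D p f.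

(* is_t a b s : t(a,b) is defined and equals s *)
Definition is_t (D : X -> X -> Prop) (p : X -> X -> R) (f : X -> X -> R -> R)
    (a b : X) (s : R) : Prop :=
  [/\ D a b, p b a < p a b, 0 < s & cdf_pos (f a b) s = p b a / p a b].

Definition Rs (D : X -> X -> Prop) (p : X -> X -> R) (x y : X) : Prop :=
  x = y \/ (D x y /\ p y x <= p x y).

Definition Rsrt (D : X -> X -> Prop) (p : X -> X -> R) (f : X -> X -> R -> R)
    (x y : X) : Prop :=
  x <> y /\ ~ D x y /\
  exists z, (exists s1 s2, [/\ is_t D p f x z s1, is_t D p f y z s2 & s1 <= s2])
         \/ (exists s1 s2, [/\ is_t D p f z x s1, is_t D p f z y s2 & s2 <= s1]).

Definition TR (Q : X -> X -> Prop) : X -> X -> Prop := clos_trans X Q.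
Definition TPR (Q : X -> X -> Prop) (x y : X) : Prop := TR Q x y /\ ~ TR Q y x.

Definition RsRsrt D p f : X -> X -> Prop := fun a b => Rs D p a b \/ Rsrt D p f a b.

End Defs.

From Pilot Require Import Defs.
From HB Require Import structures.
From mathcomp Require Import all_boot all_order all_algebra.
From mathcomp Require Import all_classical all_reals all_analysis.
From mathcomp Require Import ring lra measurable_realfun.
From Stdlib Require Import Relations.Relation_Operators.
Import Order.TTheory GRing.Theory Num.Theory.
Import numFieldNormedType.Exports.
Local Open Scope classical_set_scope.
Local Open Scope ring_scope.

(* Fix a symmetric RUM-CF (u, g, r) rationalizing (p, f) and write G(a,b) for the
   cdf of g(a,b) and v = u a - u b. Symmetry of g(a,b) about v gives G(a,b)(v) = 1/2
   and G(a,b)(0) + G(a,b)(2v) = 1. On D the rationalization identity reads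
   1 - G(a,b)(v') = p(a,b) F(a,b)(r v') for v' > 0 with r v' > 0; since F(a,b) is
   strictly increasing and r strictly decreasing, G(a,b) is strictly increasing
   wherever r is positive, which is the case near 0 and, by continuity of r, near
   every point where r is positive. Hence p(a,b) >= p(b,a) forces u a >= u b, with
   equality only when p(a,b) = 1/2; and t(a,b) = s forces G(a,b)(r^-1 s) =
   1 - p(b,a) = G(a,b)(2v), so r(2v) = s with v > 0, and comparing t's compares
   utilities because r is decreasing. So every step of R^s or R^srt weakly raises u,
   and a step between options of equal utility can be reversed, which passes to the
   transitive closure. *)

Section positive_integral.
Context d (T : measurableType d) (R : realType) (mu : {measure set T -> \bar R}).
Local Open Scope ereal_scope.

Lemma integral_gt0 (D : set T) (f : T -> R) : measurable D -> measurable_fun D f ->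
  (forall x, D x -> 0 < f x)%R -> 0 < mu D -> 0 < \int[mu]_(x in D) (f x)%:E.
Proof.
move=> mD mf f0 muD0.
have mfE : measurable_fun D (EFin \o f) by exact/measurable_EFinP.
rewrite lt0e integral_ge0 ?andbT; last by move=> x /f0/ltW; rewrite lee_fin.
apply: contraTN muD0 => /eqP intf0; rewrite -leNgt.
have : \int[mu]_(x in D) `|(f x)%:E| = 0.
  by rewrite -intf0; apply: eq_integral => x /[!inE] /f0/ltW f0x; rewrite gee0_abs.
move=> /(ae_eq_integral_abs mu mD mfE) [N [mN N0 DN]].
rewrite -N0; apply: le_measure; rewrite ?inE //.
move=> x Dx; apply: DN => /= /(_ Dx) [] /eqP.
by rewrite gt_eqF // f0.
Qed.

End positive_integral.

Section probability_density.
Context {d} {T : measurableType d} {R : realType} {mu : {measure set T -> \bar R}}.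
Context {S : set T} {h : T -> R}.
Hypotheses (mS : measurable S) (mh : measurable_fun S h) (h0 : forall x, S x -> 0 <= h x)
  (h1 : (\int[mu]_(x in S) (h x)%:E = 1)%E).
Local Open Scope ereal_scope.

Let mhE : measurable_fun S (EFin \o h). Proof. exact/measurable_EFinP. Qed.

Lemma density_integral_fin_num {A} : measurable A -> A `<=` S ->
  \int[mu]_(x in A) (h x)%:E \is a fin_num.
Proof.
move=> mA AS; have A0 : 0 <= \int[mu]_(x in A) (h x)%:E.
  by apply: integral_ge0 => x /AS/h0; rewrite lee_fin.
rewrite ge0_fin_numE // (@le_lt_trans _ _ 1) ?ltry // -h1.
by apply: ge0_subset_integral => // x /h0; rewrite lee_fin.
Qed.

Lemma fine_density_integral_le {A B} : measurable A -> measurable B ->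
  B `<=` A -> A `<=` S ->
  (fine (\int[mu]_(x in B) (h x)%:E) <= fine (\int[mu]_(x in A) (h x)%:E))%R.
Proof.
move=> mA mB BA AS; apply: fine_le; rewrite ?inE.
- exact: density_integral_fin_num mB (subset_trans BA AS).
- exact: density_integral_fin_num.
apply: ge0_subset_integral => //; first exact: measurable_funS mhE.
by move=> x /AS/h0; rewrite lee_fin.
Qed.

Lemma fine_density_integral_lt {A B} : measurable A -> measurable B ->
  B `<=` A -> A `<=` S -> 0 < \int[mu]_(x in A `\` B) (h x)%:E ->
  (fine (\int[mu]_(x in B) (h x)%:E) < fine (\int[mu]_(x in A) (h x)%:E))%R.
Proof.
move=> mA mB BA AS AB0.
have mAB : measurable (A `\` B) by exact: measurableD.
have ABS : A `\` B `<=` S by move=> x [/AS].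
rewrite -(setDUK BA) ge0_integral_setU //; first last.
- by apply/disj_set2P; rewrite setDIK.
- by move=> x; rewrite setDUK // => /AS/h0; rewrite lee_fin.
- by rewrite setDUK //; exact: measurable_funS mhE.
have Bfin := density_integral_fin_num mB (subset_trans BA AS).
have ABfin := density_integral_fin_num mAB ABS.
by rewrite [X in (_ < X)%R]fineD // ltrDl fine_gt0 // AB0 -ge0_fin_numE ?ltW.
Qed.

Lemma fine_density_integral_setU {A B} : measurable A -> measurable B ->
  A `|` B = S -> [disjoint A & B] ->
  (fine (\int[mu]_(x in A) (h x)%:E) + fine (\int[mu]_(x in B) (h x)%:E) = 1)%R.
Proof.
move=> mA mB ABS AB.
have AS : A `<=` S by rewrite -ABS; exact: subsetUl.
have BS : B `<=` S by rewrite -ABS; exact: subsetUr.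
by rewrite -fineD ?density_integral_fin_num // -ge0_integral_setU // ABS ?h1.
Qed.

End probability_density.

Section densities_on_R.
Context {R : realType}.
Local Notation mu := (@lebesgue_measure R).

Lemma lebesgue_measure_reflect (k : R) (A : set R) : measurable A ->
  pushforward mu (fun x => k - x : measurableTypeR R) A = mu A.
Proof.
move=> mA; apply/esym/lebesgue_measure_unique => //; first exact: measurable_funB.
move=> ? _ [[a b]] _ <-.
change (mu `]a, b] = mu ((fun x => k - x) @^-1` `]a, b])).
have -> : (fun x => k - x) @^-1` `]a, b]%classic = `[k - b, k - a[%classic.
  by apply/seteqP; split => x /=; rewrite !in_itv /= => /andP[? ?]; apply/andP; split; lra.
rewrite !lebesgue_measure_itv /= !lte_fin ltrD2l ltrN2.
by case: ifP => // _; congr EFin; ring.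
Qed.

Lemma ge0_integral_reflect (k : R) (A : set R) (h : R -> \bar R) :
  measurable A -> measurable_fun A h -> {in A, forall x, 0 <= h x}%E ->
  (\int[mu]_(x in A) h x =
   \int[mu]_(x in (fun x => k - x)%R @^-1` A) h (k - x)%R)%E.
Proof.
move=> mA mh h0.
have mk : measurable_fun [set: measurableTypeR R] (fun x => k - x : measurableTypeR R).
  exact: measurable_funB.
have := ge0_integral_pushforward mk lebesgue_measure mA mh h0; rewrite /comp => <-.
by apply: eq_measure_integral => /= B mB _; rewrite lebesgue_measure_reflect.
Qed.

Lemma in_nonnegR (x : R) : nonnegR x = (0 <= x).
Proof. by rewrite /nonnegR /= in_itv /= andbT. Qed.

(* [Defs.cdf] is qualified because [cdf] alone is the cdf of a random variable of
   MathComp-Analysis. *)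
Lemma cdf_nondecreasing {h : R -> R} : is_density h -> {homo Defs.cdf h : s t / s <= t}.
Proof.
move=> [mh [h0 h1]] s t st.
apply: (fine_density_integral_le (mu := mu) measurableT mh (fun x _ => h0 x) h1) => // x /=.
by rewrite !in_itv /= => /le_trans; apply.
Qed.

Lemma cdf_symmetric {h : R -> R} {c : R} (e : R) : is_density h ->
  (forall d, 0 <= d -> h (c + d) = h (c - d)) ->
  Defs.cdf h (c - e) + Defs.cdf h (c + e) = 1.
Proof.
move=> [mh [h0 h1]] hsym.
have hrefl x : h (c + c - x) = h x.
  have [cx|xc] := leP 0 (c - x); first by move: (hsym _ cx); rewrite subKr addrA.
  have xc' : 0 <= x - c by lra.
  by move: (hsym _ xc'); rewrite subrKC opprB addrA => ->.
have -> : Defs.cdf h (c - e) = fine (\int[mu]_(x in `](c + e)%R, +oo[) (h x)%:E)%E.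
  have mhE : measurable_fun setT (EFin \o h) by exact/measurable_EFinP.
  rewrite integral_itv_obnd_cbnd; last exact: measurable_funS mhE.
  rewrite (ge0_integral_reflect (c + c)) //; first last.
  - by move=> x _; rewrite lee_fin.
  - exact: measurable_funS mhE.
  have -> : (fun x => c + c - x) @^-1` `[c + e, +oo[ = `]-oo, c - e]%classic.
    by apply/seteqP; split => x /=; rewrite !in_itv /= andbT => ?; lra.
  by under eq_integral do rewrite hrefl.
rewrite addrC.
apply: (fine_density_integral_setU (mu := mu) measurableT mh (fun x _ => h0 x) h1).
- exact: measurable_itv.
- exact: measurable_itv.
- exact: itv_setU_setT.
- by rewrite -setCitvl; exact/disj_setPCl.
Qed.

Lemma cdf_center {h : R -> R} {c : R} : is_density h ->
  (forall d, 0 <= d -> h (c + d) = h (c - d)) -> Defs.cdf h c = 1 / 2.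
Proof. by move=> hd /(cdf_symmetric 0 hd); rewrite subr0 addr0 => ?; lra. Qed.

Lemma pos_density_integral_gt0 {h : R -> R} {A : set R} : is_pos_density h ->
  measurable A -> A `<=` nonnegR -> (0 < mu A)%E ->
  (0 < \int[mu]_(x in A) (h x)%:E)%E.
Proof.
move=> [mh [hpos _]] mA Anonneg muA; apply: integral_gt0 => //.
- exact: measurable_funS (measurable_itv _) Anonneg mh.
- by move=> x /Anonneg; rewrite in_nonnegR; exact: hpos.
Qed.

Lemma cdf_pos_lt {h : R -> R} {s t : R} : is_pos_density h -> 0 <= s -> s < t ->
  cdf_pos h s < cdf_pos h t.
Proof.
move=> hd s0 st; have [mh [hpos h1]] := hd.
have h0 x : nonnegR x -> 0 <= h x by rewrite in_nonnegR => /hpos/ltW.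
apply: (fine_density_integral_lt (mu := mu) (measurable_itv _) mh h0 h1).
- exact: measurable_itv.
- exact: measurable_itv.
- by move=> x /=; rewrite !in_itv /= => /andP[-> /le_trans]; apply; exact: ltW.
- by move=> x /=; rewrite !in_itv /= andbT => /andP[].
have -> : `[0, t] `\` `[0, s] = `]s, t]%classic.
  apply/seteqP; split => x /=; rewrite !in_itv /=.
  - by move=> [/andP[x0 ->]] /negP; rewrite x0 /= -ltNge => ->.
  - move=> /andP[sx ->]; rewrite (le_trans s0 (ltW sx)); split=> //.
    by rewrite /= leNgt sx.
apply: pos_density_integral_gt0 => //.
- by move=> x; rewrite in_nonnegR /= in_itv /= => /andP[? _]; lra.
- by rewrite lebesgue_measure_itv /= lte_fin st -EFinD lte_fin subr_gt0.
Qed.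

Lemma cdf_pos_lt1 {h : R -> R} {t : R} : is_pos_density h -> 0 <= t -> cdf_pos h t < 1.
Proof.
move=> hd t0; have [mh [hpos h1]] := hd.
have h0 x : nonnegR x -> 0 <= h x by rewrite in_nonnegR => /hpos/ltW.
have <- : fine (\int[mu]_(x in nonnegR) (h x)%:E)%E = 1 by rewrite h1.
apply: (fine_density_integral_lt (mu := mu) (measurable_itv _) mh h0 h1) => //.
- exact: measurable_itv.
- by move=> x; rewrite in_nonnegR /= in_itv /= => /andP[].
have -> : nonnegR `\` `[0, t] = `]t, +oo[%classic.
  apply/seteqP; split => x /=; rewrite in_nonnegR !in_itv /= andbT.
  - by move=> [x0] /negP; rewrite x0 /= -ltNge.
  - move=> tx; rewrite (le_trans t0 (ltW tx)); split=> //.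
    by rewrite /= leNgt tx.
apply: pos_density_integral_gt0 => //.
- by move=> x; rewrite in_nonnegR /= in_itv /= andbT; lra.
- by rewrite lebesgue_measure_itv /= ltry addye.
Qed.

End densities_on_R.

Section chronometric_function.
Context {R : realType}.
Context {r : R -> R} (hr : is_CF r).

Lemma CF_anti {a b : R} : 0 < a -> 0 < b -> 0 < r a -> 0 < r b -> r a <= r b -> b <= a.
Proof.
have [_ _ rdec _ _] := hr; move=> a0 b0 ra rb; apply: contraTT; rewrite -!ltNge.
by move=> ab; apply: rdec.
Qed.

Lemma r_invK {v : R} : 0 < v -> 0 < r v -> r_inv r (r v) = v.
Proof.
move=> v0 rv0; apply: xget_unique => [//|w [w0 [rw0 rwv]]].
by apply/le_anti/andP; split; apply: CF_anti; rewrite ?rwv.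
Qed.

Lemma CF_gt0_near0 : exists2 e : R, 0 < e & forall v, 0 < v -> v < e -> 0 < r v.
Proof.
have [_ _ _ rinf _] := hr.
have : \forall v \near 0^'+, 0 < r v by exact: cvgry_gt.
move=> /nbhs_ballP[e /= e0 He].
exists e => // v v0 ve; apply: He => //.
by rewrite /ball /= sub0r normrN gtr0_norm.
Qed.

Lemma CF_gt0_near {w : R} : 0 < w -> 0 < r w ->
  exists2 e : R, 0 < e & forall v, `|w - v| < e -> 0 < r v.
Proof.
have [_ rc _ _ _] := hr; move=> w0 rw0.
have wpos : w \in posR by rewrite inE /posR /= in_itv /= andbT.
have : \forall v \near w, 0 < r v by exact: cvgr_gt (rc w wpos) _ rw0.
move=> /nbhs_ballP[e /= e0 He].
by exists e.
Qed.

End chronometric_function.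

Section rationalization.
Context {R : realType} {X : finType}.
Context {D : X -> X -> Prop} {p : X -> X -> R} {f : X -> X -> R -> R}.
Context {u : X -> R} {g : X -> X -> R -> R} {r : R -> R}.
Hypotheses (hD : is_domain D) (hpf : is_SCF_RT D p f) (hrum : is_RUM u g) (hr : is_CF r)
  (hsym : is_symmetric u g) (hrat : rationalizes u g r D p f).

Local Notation G a b := (Defs.cdf (g a b)).

Let D_neq {a b} : D a b -> a <> b.
Proof. by have [_ [Dneq _]] := hD; exact: Dneq. Qed.

Let D_sym {a b} : D a b -> D b a.
Proof. by have [_ [_ Dsym]] := hD; exact: Dsym. Qed.

Let p_sum {a b} : D a b -> 0 < p a b /\ p a b + p b a = 1.
Proof. by have [hp _] := hpf; exact: hp. Qed.

Lemma cdf_utility_diff {a b} : a <> b -> G a b (u a - u b) = 1 / 2.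
Proof.
by move=> ab; have [gd _ _ _ _] := hrum a b ab; exact: cdf_center gd (hsym _ _ ab).
Qed.

Lemma cdf0_rationalized {a b} : D a b -> G a b 0 = p b a.
Proof. by move=> /hrat[]. Qed.

Lemma survival_rationalized {a b v} : D a b -> 0 < v -> 0 < r v ->
  1 - G a b v = p a b * cdf_pos (f a b) (r v).
Proof.
move=> Dab v0 rv0; have [G0 Gt] := hrat _ _ Dab; have [pab0 pab1] := p_sum Dab.
have := Gt _ rv0; rewrite (r_invK hr) // G0 (_ : 1 - p b a = p a b); last by lra.
by move=> <-; rewrite mulrC divfK // gt_eqF.
Qed.

(* If [t] were not a value of [r], [r_inv r t] would be the default [0] and the
   rationalization condition at [t] would force [F(t) = 1]. *)
Lemma CF_surj_rationalized {a b t} : D a b -> 0 < t -> exists2 v, 0 < v & r v = t.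
Proof.
move=> Dab t0.
have [[v [v0 [_ rvt]]]|nex] := pselect (exists v, 0 < v /\ 0 < r v /\ r v = t).
  by exists v.
have rinv0 : r_inv r t = 0 by apply: xgetPN => v Pv; apply: nex; exists v.
have [G0 Gt] := hrat _ _ Dab; have [pab0 pab1] := p_sum Dab; have [_ fd] := hpf.
have := Gt _ t0; rewrite rinv0 G0 (_ : 1 - p b a = p a b); last by lra.
rewrite divff ?gt_eqF // => F1.
by have := cdf_pos_lt1 (fd _ _ Dab) (ltW t0); rewrite -F1 ltxx.
Qed.

Lemma cdf_lt_rationalized {a b s t v1 v2} : D a b -> s <= v1 -> v1 < v2 -> v2 <= t ->
  0 < v1 -> 0 < r v1 -> 0 < r v2 -> G a b s < G a b t.
Proof.
move=> Dab sv1 v12 v2t v10 rv1 rv2; have v20 := lt_trans v10 v12.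
have [gd _ _ _ _] := hrum a b (D_neq Dab); have [_ fd] := hpf.
have [pab0 _] := p_sum Dab; have [_ _ rdec _ _] := hr.
have F12 := cdf_pos_lt (fd _ _ Dab) (ltW rv2) (rdec _ _ v10 v12 rv1 rv2).
have := survival_rationalized Dab v10 rv1; have := survival_rationalized Dab v20 rv2.
have := cdf_nondecreasing gd _ _ sv1; have := cdf_nondecreasing gd _ _ v2t.
have : p a b * cdf_pos (f a b) (r v2) < p a b * cdf_pos (f a b) (r v1) by rewrite ltr_pM2l.
lra.
Qed.

Lemma Rs_utility {a b} : D a b -> p b a <= p a b ->
  u b <= u a /\ (u a = u b -> p a b <= p b a).
Proof.
move=> Dab pba; have [pab0 pab1] := p_sum Dab.
split; last first.
  move=> uab; have := cdf_utility_diff (D_neq Dab).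
  by rewrite uab subrr cdf0_rationalized //; lra.
rewrite leNgt; apply/negP => uab.
have [e e0 He] := CF_gt0_near0 hr.
set m := Num.min (e / 2) (u b - u a).
have m0 : 0 < m by rewrite lt_min divr_gt0 // subr_gt0.
have me : m <= e / 2 by rewrite ge_min lexx.
have mc : m <= u b - u a by rewrite ge_min lexx orbT.
have rm2 : 0 < r (m / 2) by apply: He; lra.
have rm : 0 < r m by apply: He; lra.
suff : p a b < 1 / 2 by lra.
rewrite -(cdf0_rationalized (D_sym Dab)) -(cdf_utility_diff (nesym (D_neq Dab))).
by apply: (cdf_lt_rationalized (D_sym Dab) _ _ mc _ rm2 rm); lra.
Qed.

Lemma cdf_inj_rationalized {a b w z} : D a b -> 0 < w -> 0 < r w -> 0 <= z ->
  G a b z = G a b w -> z = w.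
Proof.
move=> Dab w0 rw0 z0 Gzw; have [e e0 He] := CF_gt0_near hr w0 rw0.
have [zw|wz|//] := ltgtP z w; exfalso.
- set m := Num.min e (w - z).
  have m0 : 0 < m by rewrite lt_min e0 subr_gt0.
  have me : m <= e by rewrite ge_min lexx.
  have mw : m <= w - z by rewrite ge_min lexx orbT.
  have rv : 0 < r (w - m / 2) by apply: He; rewrite subKr gtr0_norm; lra.
  suff : G a b z < G a b w by rewrite Gzw ltxx.
  by apply: (cdf_lt_rationalized Dab _ _ (lexx w) _ rv rw0); lra.
- set m := Num.min e (z - w).
  have m0 : 0 < m by rewrite lt_min e0 subr_gt0.
  have me : m <= e by rewrite ge_min lexx.
  have mz : m <= z - w by rewrite ge_min lexx orbT.
  have rv : 0 < r (w + m / 2).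
    by apply: He; rewrite opprD addrA subrr sub0r normrN gtr0_norm; lra.
  suff : G a b w < G a b z by rewrite Gzw ltxx.
  by apply: (cdf_lt_rationalized Dab (lexx w) _ _ w0 rw0 rv); lra.
Qed.

Lemma t_utility {a b s} : is_t D p f a b s -> u b < u a /\ r (2 * (u a - u b)) = s.
Proof.
move=> [Dab pab s0 Fs]; have [pab0 pab1] := p_sum Dab.
have [uba uab] := Rs_utility Dab (ltW pab).
have ult : u b < u a.
  by rewrite lt_neqAle uba andbT; apply/eqP => /esym/uab; rewrite leNgt pab.
split => //.
have [w w0 rws] := CF_surj_rationalized Dab s0; have rw0 : 0 < r w by rewrite rws.
suff -> : 2 * (u a - u b) = w by [].
apply: (cdf_inj_rationalized Dab w0 rw0); first by lra.
have [gd _ _ _ _] := hrum a b (D_neq Dab).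
have := cdf_symmetric (u a - u b) gd (hsym _ _ (D_neq Dab)).
have := survival_rationalized Dab w0 rw0.
rewrite rws Fs mulrC divfK ?gt_eqF // subrr cdf0_rationalized //.
by rewrite mulr_natl mulr2n; lra.
Qed.

Lemma Rsrt_utility {a b} : Rsrt D p f a b -> u b <= u a /\ (u a = u b -> Rsrt D p f b a).
Proof.
move=> [ab [nDab [z [[s1 [s2 [t1 t2 s12]]]|[s1 [s2 [t1 t2 s21]]]]]]].
- have [[uza r1] [uzb r2]] := (t_utility t1, t_utility t2).
  have [[_ _ s10 _] [_ _ s20 _]] := (t1, t2).
  have uba : u b <= u a.
    suff : 2 * (u b - u z) <= 2 * (u a - u z) by lra.
    by apply: (CF_anti hr); rewrite ?r1 ?r2 //; lra.
  split => // uab; split; [exact: nesym | split; [by move/D_sym|]].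
  by exists z; left; exists s2, s1; split => //; rewrite -r1 -r2 uab.
- have [[uaz r1] [ubz r2]] := (t_utility t1, t_utility t2).
  have [[_ _ s10 _] [_ _ s20 _]] := (t1, t2).
  have uba : u b <= u a.
    suff : 2 * (u z - u a) <= 2 * (u z - u b) by lra.
    by apply: (CF_anti hr); rewrite ?r1 ?r2 //; lra.
  split => // uab; split; [exact: nesym | split; [by move/D_sym|]].
  by exists z; right; exists s2, s1; split => //; rewrite -r1 -r2 uab.
Qed.

Lemma RsRsrt_utility {a b} : RsRsrt D p f a b ->
  u b <= u a /\ (u a = u b -> RsRsrt D p f b a).
Proof.
case=> [[<-|[Dab pba]]|ab]; first by split => //; left; left.
- have [uba uab] := Rs_utility Dab pba.
  by split => // /uab pab; left; right; split; [exact: D_sym|].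
- by have [uba uab] := Rsrt_utility ab; split => // /uab; right.
Qed.

Lemma TR_utility {a b} : TR (RsRsrt D p f) a b ->
  u b <= u a /\ (u a = u b -> TR (RsRsrt D p f) b a).
Proof.
elim=> [x y /RsRsrt_utility[uyx uxy]|x y z _ [uyx uxy] _ [uzy uyz]].
  by split => // /uxy; exact: t_step.
have uzx := le_trans uzy uyx; split => // uxz.
have exy : u x = u y by apply/le_anti; rewrite uyx uxz uzy.
by apply: t_trans (uyz _) (uxy exy); rewrite -exy.
Qed.

End rationalization.

Theorem corollary4 (R : realType) (X : finType) (D : X -> X -> Prop)
  (p : X -> X -> R) (f : X -> X -> R -> R) (x y : X) :
  is_domain D -> is_SCF_RT D p f -> sym_rationalizable D p f ->
  (TR (RsRsrt D p f) x y ->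
     forall (u : X -> R) (g : X -> X -> R -> R) (r : R -> R),
       is_RUM_CF u g r -> is_symmetric u g -> rationalizes u g r D p f ->
       u y <= u x) /\
  (TPR (RsRsrt D p f) x y ->
     forall (u : X -> R) (g : X -> X -> R -> R) (r : R -> R),
       is_RUM_CF u g r -> is_symmetric u g -> rationalizes u g r D p f ->
       u y < u x).
Proof.
move=> hD hpf _; split=> [Txy | [Txy nTyx]] u g r [hrum hr] hsym hrat.
  by have [] := TR_utility hD hpf hrum hr hsym hrat Txy.
have [uyx uxy] := TR_utility hD hpf hrum hr hsym hrat Txy.
by rewrite lt_neqAle uyx andbT; apply/eqP => /esym /uxy.
Qed.
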